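(* Let $A$ be a finite-vertex graph and $w$ a right-infinite path over $A$. The following are equivalent: (1) $w$ is recurrent; (2) $P_{\mathsf{Sd}}(w)$ contains an idempotent; (3) $P_{\mathsf V}(w)$ contains an idempotent for every pseudovariety of semigroupoids $\mathsf V$ containing $\mathsf N$; (4) $P_{g\mathsf{LSl}}(w)$ contains an idempotent.
   Context: Semigroupoids are graphs with associative partial multiplication $st$ defined iff the source of $s$ equals the range of $t$. Pseudovarieties of semigroupoids: classes of finite semigroupoids closed under divisors, finite direct products, finite coproducts; $\mathsf{Sd}$ is the pseudovariety of all finite semigroupoids, $\mathsf N$ that of finite nilpotent semigroups, $\mathsf{LSl}$ the pseudovariety of finite semigroups $S$ such that $eSe$ is a semilattice for every idempotent $e$, and $g\mathsf{LSl}$ the smallest pseudovariety of semigroupoids containing $\mathsf{LSl}$. $\overline{\Omega}_A\mathsf V$ is the free pro-$\mathsf V$ semigroupoid over the finite-vertex graph $A$, containing the paths over $A$ when $\mathsf V\supseteq\mathsf N$. A right-infinite path is a sequence $w=w_0w_1\cdots$ of edges with each $w[0,n)=w_0\cdots w_{n-1}$ a path; $w[m,m+n)=w_m\cdots w_{m+n-1}$, $w[0,n]=w_0\cdots w_n$. $P_{\mathsf V}(w)$ is the set of cluster points in $\overline{\Omega}_A\mathsf V$ of $(w[0,n])_{n\in\mathbb N}$. $w$ is recurrent if for every $n$ there is $m>n$ with $w[0,n)=w[m,m+n)$. *)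

From mathcomp Require Import all_boot.
Set Implicit Arguments. Unset Strict Implicit. Unset Printing Implicit Defensive.

Record graph := Graph {
  gV : finType; gE : Type; gsrc : gE -> gV; grng : gE -> gV }.

(** Multiplication [smul s t] is meaningful only when [ssrc s = srng t]
   (the paper's convention: st defined iff source of s = range of t);
   on other pairs it is an irrelevant junk value. *)
Record sgd := Sgd {
  sV : finType; sE : finType;
  ssrc : sE -> sV; srng : sE -> sV;
  smul : sE -> sE -> sE;
  smul_src : forall s t, ssrc s = srng t -> ssrc (smul s t) = ssrc t;
  smul_rng : forall s t, ssrc s = srng t -> srng (smul s t) = srng s;
  smulA : forall s t u, ssrc s = srng t -> ssrc t = srng u ->
            smul (smul s t) u = smul s (smul t u) }.
Arguments ssrc {_} _. Arguments srng {_} _. Arguments smul {_} _ _.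

Record shom (S T : sgd) := SHom {
  hv : sV S -> sV T; he : sE S -> sE T;
  hsrc : forall e, ssrc (he e) = hv (ssrc e);
  hrng : forall e, srng (he e) = hv (srng e);
  hmul : forall s t, ssrc s = srng t -> he (smul s t) = smul (he s) (he t) }.

(** Division (Tilson / Almeida--Weil): S divides T iff there are a
   semigroupoid R, a faithful morphism R -> T and a quotient morphism
   R -> S (bijective on vertices, onto on edges). *)
Definition divides (S T : sgd) : Prop :=
  exists R : sgd, exists f : shom R T, exists g : shom R S,
    (forall r r' : sE R, ssrc r = ssrc r' -> srng r = srng r' ->
        he f r = he f r' -> r = r') /\
    bijective (hv g) /\ (forall e : sE S, exists r, he g r = e).

Definition prod_sgd (S T : sgd) : sgd.
Proof.
refine (@Sgd (sV S * sV T)%type (sE S * sE T)%type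
  (fun e => (ssrc e.1, ssrc e.2)) (fun e => (srng e.1, srng e.2))
  (fun s t => (smul s.1 t.1, smul s.2 t.2)) _ _ _).
- by move=> [a b] [c d] /= [h1 h2]; rewrite !smul_src.
- by move=> [a b] [c d] /= [h1 h2]; rewrite !smul_rng.
- by move=> [a b] [c d] [e f] /= [h1 h2] [h3 h4]; rewrite !smulA.
Defined.

Definition coprod_mul (S T : sgd) (s t : sE S + sE T) : sE S + sE T :=
  match s, t with
  | inl a, inl b => inl (smul a b)
  | inr a, inr b => inr (smul a b)
  | _, _ => s
  end.

Definition coprod_src (S T : sgd) (e : sE S + sE T) : (sV S + sV T)%type :=
  match e with inl a => inl (ssrc a) | inr a => inr (ssrc a) end.
Definition coprod_rng (S T : sgd) (e : sE S + sE T) : (sV S + sV T)%type :=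
  match e with inl a => inl (srng a) | inr a => inr (srng a) end.

Definition coprod_sgd (S T : sgd) : sgd.
Proof.
refine (@Sgd (sV S + sV T)%type (sE S + sE T)%type
  (@coprod_src S T) (@coprod_rng S T) (@coprod_mul S T) _ _ _).
- by move=> [a|a] [b|b] //= [h]; rewrite smul_src.
- by move=> [a|a] [b|b] //= [h]; rewrite smul_rng.
- by move=> [a|a] [b|b] [c|c] //= [h1] [h2]; rewrite smulA.
Defined.

(** Empty semigroupoid (empty coproduct) and trivial one (empty product). *)
Definition empty_sgd : sgd.
Proof.
refine (@Sgd void void (fun e => e) (fun e => e) (fun s _ => s) _ _ _);
  by case.
Defined.

Definition unit_sgd : sgd.
Proof.
refine (@Sgd unit unit (fun _ => tt) (fun _ => tt) (fun _ _ => tt) _ _ _);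
  by [].
Defined.

Definition pseudovariety (V : sgd -> Prop) : Prop :=
  [/\ forall S T, divides S T -> V T -> V S,
      V unit_sgd, (forall S T, V S -> V T -> V (prod_sgd S T)),
      V empty_sgd & (forall S T, V S -> V T -> V (coprod_sgd S T))].

Definition Sd : sgd -> Prop := fun _ => True.

(** Product of a nonempty finite sequence f 0 f 1 ... f n (n+1 factors). *)
Fixpoint prodp (S : sgd) (f : nat -> sE S) (n : nat) : sE S :=
  match n with
  | 0 => f 0
  | n'.+1 => smul (prodp f n') (f n'.+1)
  end.

(** Finite semigroups = one-vertex semigroupoids. *)
Definition is_semigroup (S : sgd) : Prop := #|sV S| = 1.

Definition nilpotent (S : sgd) : Prop :=
  is_semigroup S /\
  exists z : sE S, exists n : nat, forall f : nat -> sE S, prodp f n = z.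

Definition contains_N (V : sgd -> Prop) : Prop :=
  forall S, nilpotent S -> V S.

Definition LSl (S : sgd) : Prop :=
  is_semigroup S /\
  forall e s t : sE S, smul e e = e ->
    let a := smul (smul e s) e in let b := smul (smul e t) e in
    smul a a = a /\ smul a b = smul b a.

Definition gLSl (S : sgd) : Prop :=
  forall V, pseudovariety V -> (forall T, LSl T -> V T) -> V S.

Record ghom (A : graph) (S : sgd) := GHom {
  gv : gV A -> sV S; ge : gE A -> sE S;
  ge_src : forall a, ssrc (ge a) = gv (gsrc a);
  ge_rng : forall a, srng (ge a) = gv (grng a) }.

Definition rinf_path (A : graph) (w : nat -> gE A) : Prop :=
  forall i, gsrc (w i) = grng (w i.+1).

Definition recurrent (A : graph) (w : nat -> gE A) : Prop :=
  forall n, exists m, n < m /\ forall i, i < n -> w i = w (m + i).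

(** Elements of the free pro-V semigroupoid over A, described (Reiterman /
   Almeida) as implicit operations: compatible families indexed by graph
   morphisms phi : A -> S with S in V, with value an edge of S, natural with
   respect to semigroupoid morphisms between members of V. *)
Definition free_elt (V : sgd -> Prop) (A : graph) (x y : gV A)
  (pi : forall S : sgd, V S -> ghom A S -> sE S) : Prop :=
  (forall S (hS : V S) (phi : ghom A S),
      ssrc (pi S hS phi) = gv phi x /\ srng (pi S hS phi) = gv phi y) /\
  (forall S T (hS : V S) (hT : V T) (psi : shom S T)
          (phi : ghom A S) (phi' : ghom A T),
      (forall v, gv phi' v = hv psi (gv phi v)) ->
      (forall a, ge phi' a = he psi (ge phi a)) ->
      pi T hT phi' = he psi (pi S hS phi)).

Definition eval_prefix (A : graph) (S : sgd) (phi : ghom A S)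
  (w : nat -> gE A) (n : nat) : sE S :=
  prodp (fun i => ge phi (w i)) n.

(** pi (with vertices x,y) is a cluster point of (w[0,n])_n in the free
   pro-V semigroupoid: every basic open neighbourhood (finitely many
   coordinates) contains w[0,n] for infinitely many n. *)
Definition cluster_pt (V : sgd -> Prop) (A : graph) (w : nat -> gE A)
  (x y : gV A) (pi : forall S : sgd, V S -> ghom A S -> sE S) : Prop :=
  forall (k : nat) (Ss : 'I_k -> sgd) (hs : forall i, V (Ss i))
         (phis : forall i, ghom A (Ss i)) (N : nat),
  exists n, N <= n /\ gsrc (w n) = x /\ grng (w 0) = y /\
    forall i, pi (Ss i) (hs i) (phis i) = eval_prefix (phis i) w n.

Definition P_has_idempotent (V : sgd -> Prop) (A : graph) (w : nat -> gE A)
  : Prop :=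
  exists x : gV A, exists pi : (forall S : sgd, V S -> ghom A S -> sE S),
    @free_elt V A x x pi /\
    (forall S (hS : V S) (phi : ghom A S),
        smul (pi S hS phi) (pi S hS phi) = pi S hS phi) /\
    @cluster_pt V A w x x pi.

(* Recurrence of w makes the prefixes w[0,n] idempotent infinitely often in
   every finite semigroupoid: the return times L_0 < L_1 < ... of a recurrent
   word cut it into blocks whose values satisfy d(a,c) = d(b,c) d(a,b), and
   Ramsey's theorem for triangles yields a < b < c with all three values equal,
   hence an idempotent. An ultrafilter containing all sets of such loop-closing
   idempotent prefixes then selects a single cluster point, simultaneously for
   all finite semigroupoids, and that cluster point is idempotent.

   Conversely, to recover recurrence up to length n we evaluate w in a finite
   LSl semigroup of descriptions of words over a finite alphabet coding w: a
   word is described by its prefix and suffix of length K = 2n and by whether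
   u = w[0,K) occurs in it at a nonzero position. An idempotent cluster point
   gives an idempotent prefix w[0,m]; since u occurs in w[0,m]w[0,m] at
   position m+1, it occurs in w[0,m] at some position p > 0, so w[0,K) has
   period p, which yields a return of w[0,n) after position n. *)

From mathcomp Require Import all_boot zify.
From mathcomp Require Import boolp classical_sets filter.
Set Implicit Arguments. Unset Strict Implicit. Unset Printing Implicit Defensive.

(** * Ramsey's theorem for triangles *)

Definition infinitely (P : nat -> Prop) := forall N, exists2 n, N <= n & P n.

Lemma infinitely_pigeonhole (C : finType) (P : nat -> Prop) (c : nat -> C) :
  infinitely P -> exists k, infinitely (fun n => P n /\ c n = k).
Proof.
move=> infP; apply: contrapT => /forallNP fin.
have /choice[N HN] : forall k, exists N, forall n, N <= n -> P n -> c n <> k.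
  move=> k; have /existsNP[N /forall2NP HN] := fin k; exists N => n Nn Pn ckn.
  by case: (HN n) => // -[].
have [n Nn Pn] := infP (\max_k N k).
exact: HN (c n) n (leq_trans (leq_bigmax _) Nn) Pn erefl.
Qed.

Lemma ramsey_triangle (C : finType) (d : nat -> nat -> C) :
  exists a b c, [/\ a < b < c, d a c = d a b & d b c = d a b].
Proof.
suff: forall n (Cs : {set C}) (X : nat -> Prop), #|Cs| <= n -> infinitely X ->
    (forall a b, X a -> X b -> a < b -> d a b \in Cs) ->
    exists a b c, [/\ a < b < c, d a c = d a b & d b c = d a b].
  move=> /(_ _ [set: C] (fun _ => True) (leqnn _)); apply=> [N|a b _ _ _].
    by exists N.
  by rewrite inE.
elim=> [|n IHn] Cs X Csn infX XCs.
  have [a _ Xa] := infX 0; have [b ab Xb] := infX a.+1.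
  by move: Csn (XCs a b Xa Xb ab); rewrite leqn0 cards_eq0 => /eqP ->; rewrite inE.
have [a _ Xa] := infX 0.
have infY : infinitely (fun b => X b /\ a < b).
  move=> N; have [b Nb Xb] := infX (maxn N a.+1).
  by exists b; [|split]; rewrite // (leq_trans _ Nb) // leq_max leqnn ?orbT.
have [k infZ] := infinitely_pigeonhole (d a) infY.
have [[b [b' [[[_ ab] dab] [_ dab'] [bb' dbb']]]] | noZ] :=
  pselect (exists b b', [/\ (X b /\ a < b) /\ d a b = k,
                            (X b' /\ a < b') /\ d a b' = k & b < b' /\ d b b' = k]).
  by exists a, b, b'; rewrite dab dab' dbb' ab bb'.
have [b _ [[Xb ab] dab]] := infZ 0.
have kCs : k \in Cs by rewrite -dab; apply: XCs.
apply: (IHn (Cs :\ k) (fun b => (X b /\ a < b) /\ d a b = k)) => //.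
  by move: Csn; rewrite (cardsD1 k Cs) kCs.
move=> b1 b2 [[Xb1 ab1] db1] [[Xb2 ab2] db2] b12; rewrite !inE XCs // andbT.
by apply/eqP => db12; apply: noZ; exists b1, b2.
Qed.

Section PathProducts.
Variables (S : sgd) (f : nat -> sE S).
Hypothesis f_chain : forall i, ssrc (f i) = srng (f i.+1).

Lemma ssrc_prodp n : ssrc (prodp f n) = ssrc (f n).
Proof.
elim: n => [|n IHn] //=.
by rewrite smul_src // IHn f_chain.
Qed.

Lemma srng_prodp n : srng (prodp f n) = srng (f 0).
Proof.
elim: n => [|n IHn] //=.
by rewrite smul_rng // ssrc_prodp f_chain.
Qed.

End PathProducts.

Lemma prodpS (S : sgd) (f : nat -> sE S) n :
  prodp f n.+1 = smul (prodp f n) (f n.+1).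
Proof. by []. Qed.

Lemma prodp_cat (S : sgd) (f : nat -> sE S) a b :
  (forall i, ssrc (f i) = srng (f i.+1)) ->
  prodp f (a.+1 + b) = smul (prodp f a) (prodp (fun i => f (a.+1 + i)) b).
Proof.
move=> f_chain; pose g i := f (a.+1 + i).
have g_chain i : ssrc (g i) = srng (g i.+1) by rewrite /g addnS f_chain.
rewrite -/g; elim: b => [|b IHb]; first by rewrite /g /= !addn0.
have fg : ssrc (prodp f a) = srng (prodp g b).
  by rewrite ssrc_prodp // srng_prodp // /g addn0 f_chain.
have gf : ssrc (prodp g b) = srng (f (a.+1 + b).+1).
  by rewrite ssrc_prodp // /g f_chain.
by rewrite addnS prodpS IHb [prodp g b.+1]prodpS smulA // /g addnS.
Qed.

Lemma eq_prodp (S : sgd) (f g : nat -> sE S) n :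
  (forall i, i <= n -> f i = g i) -> prodp f n = prodp g n.
Proof.
elim: n => [|n IHn] fg /=; first exact: fg.
by rewrite IHn ?fg // => i ni; apply: fg; apply: leqW.
Qed.

Definition pair_ghom (A : graph) (S T : sgd) (p : ghom A S) (q : ghom A T) :
  ghom A (prod_sgd S T).
Proof.
refine (@GHom A (prod_sgd S T) (fun v => (gv p v, gv q v))
                              (fun e => (ge p e, ge q e)) _ _).
- by move=> a /=; rewrite !ge_src.
- by move=> a /=; rewrite !ge_rng.
Defined.

Definition unit_ghom (A : graph) : ghom A unit_sgd :=
  @GHom A unit_sgd (fun _ => tt) (fun _ => tt) (fun _ => erefl) (fun _ => erefl).

Lemma eval_prefix_pair (A : graph) (S T : sgd) (p : ghom A S) (q : ghom A T) w n :
  eval_prefix (pair_ghom p q) w n = (eval_prefix p w n, eval_prefix q w n).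
Proof. by elim: n => //= n; rewrite /eval_prefix /= => ->. Qed.

Section Evaluation.
Variables (A : graph) (w : nat -> gE A).
Hypothesis w_path : rinf_path w.

Lemma ge_chain (S : sgd) (phi : ghom A S) i :
  ssrc (ge phi (w i)) = srng (ge phi (w i.+1)).
Proof. by rewrite ge_src ge_rng w_path. Qed.

Lemma ssrc_eval_prefix (S : sgd) (phi : ghom A S) n :
  ssrc (eval_prefix phi w n) = gv phi (gsrc (w n)).
Proof. by rewrite /eval_prefix ssrc_prodp ?ge_src //; apply: ge_chain. Qed.

Lemma srng_eval_prefix (S : sgd) (phi : ghom A S) n :
  srng (eval_prefix phi w n) = gv phi (grng (w 0)).
Proof. by rewrite /eval_prefix srng_prodp ?ge_rng //; apply: ge_chain. Qed.

Lemma eval_prefix_shom (S T : sgd) (psi : shom S T) (phi : ghom A S)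
    (phi' : ghom A T) :
  (forall a, ge phi' a = he psi (ge phi a)) ->
  forall n, eval_prefix phi' w n = he psi (eval_prefix phi w n).
Proof.
move=> phi'E; elim=> [|n IHn]; first exact: phi'E.
rewrite /eval_prefix !prodpS -!/(eval_prefix _ w n) IHn phi'E hmul //.
by rewrite ssrc_eval_prefix ge_rng w_path.
Qed.

End Evaluation.

(** * Recurrence gives idempotent cluster points *)

Lemma doubling_homo (L : nat -> nat) :
  (forall k, (L k).*2 < L k.+1) -> {homo L : a b / a <= b}.
Proof.
move=> Lgrow; apply: homo_leq => [//|y x z /leq_trans|k]; first exact.
by have := Lgrow k; lia.
Qed.

Section RecurrentIdempotents.
Variables (A : graph) (w : nat -> gE A).
Hypotheses (w_path : rinf_path w) (w_rec : recurrent w).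

Lemma recurrent_return_times N :
  exists L : nat -> nat,
    [/\ N < L 0, forall k, (L k).*2 < L k.+1
      & forall a b t, a <= b -> t < L a -> w (L b - L a + t) = w t].
Proof.
have /choice[g gP] := w_rec.
pose L k := iter k (fun l => l + g l) N.+1.
have LS k : L k.+1 = L k + g (L k) by [].
have Lgrow k : (L k).*2 < L k.+1 by have := (gP (L k)).1; rewrite LS; lia.
have Lmono := doubling_homo Lgrow.
exists L; split=> // a b t.
elim: b => [|b IHb]; first by rewrite leqn0 => /eqP-> _; rewrite subnn.
rewrite leq_eqVlt ltnS => /orP[/eqP-> _|ab ta]; first by rewrite subnn.
have := Lmono _ _ ab; rewrite -{}IHb // LS => Lab.
rewrite (_ : _ + t = g (L b) + (L b - L a + t)); last by lia.
by rewrite -(gP (L b)).2 //; lia.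
Qed.

Lemma recurrent_idempotent_prefix (S : sgd) (phi : ghom A S) N :
  exists n, [/\ N <= n, gsrc (w n) = grng (w 0)
    & smul (eval_prefix phi w n) (eval_prefix phi w n) = eval_prefix phi w n].
Proof.
have [L [NL Lgrow Lret]] := recurrent_return_times N.
have Lmono := doubling_homo Lgrow.
have gap a b : a < b -> L a < L b - L a.
  by move=> /Lmono; have := Lgrow a; lia.
pose d a b := eval_prefix phi w (L b - L a).-1.
(* w[0, L c - L a) is w[0, L c - L b) followed by a copy of w[0, L b - L a). *)
have dmul a b c : a < b -> b < c -> d a c = smul (d b c) (d a b).
  move=> ab bc; have := gap _ _ ab; have := gap _ _ bc.
  have := Lmono _ _ (ltnW ab); have := Lmono _ _ (ltnW bc) => Lbc Lab gbc gab.
  rewrite /d /eval_prefix (_ : (L c - L a).-1 = (L c - L b).-1.+1 + (L b - L a).-1);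
    last by lia.
  rewrite prodp_cat; last exact: ge_chain.
  congr smul; apply: eq_prodp => i ile.
  by rewrite (_ : (L c - L b).-1.+1 = L c - L b) ?Lret //; lia.
have [a [b [c [/andP[ab bc] dac dbc]]]] := ramsey_triangle d.
have gab := gap _ _ ab; have := Lmono 0 a isT => L0a.
exists (L b - L a).-1; split; first by lia.
  rewrite w_path (_ : _.+1 = L b - L a + 0); last by lia.
  by rewrite Lret //; [exact: ltnW | lia].
by have := dmul a b c ab bc; rewrite dac dbc.
Qed.

End RecurrentIdempotents.

Lemma ultra_finite_value (T : Type) (G : set_system T) (C : finType) (f : T -> C) :
  UltraFilter G -> exists c, G (fun t => f t = c).
Proof.
move=> GU; apply: contrapT => /forallNP noc.
have : G (fun t => forall c, f t <> c).
  apply: filter_forall => c.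
  by case: (in_ultra_setVsetC [set t | f t = c] GU) => // /noc.
by case/filter_ex=> t /(_ (f t)).
Qed.

Lemma ultra_value_unique (T C : Type) (G : set_system T) (f : T -> C) c c' :
  UltraFilter G -> G (fun t => f t = c) -> G (fun t => f t = c') -> c = c'.
Proof. by move=> GU Gc Gc'; have [t [<- <-]] := filter_ex (filterI Gc Gc'). Qed.

Local Open Scope classical_set_scope.

Section RecurrentCluster.
Variables (A : graph) (w : nat -> gE A).
Hypotheses (w_path : rinf_path w) (w_rec : recurrent w).

Definition good_prefix (t : {S : sgd & ghom A S}) (N : nat) : set nat :=
  fun n => let s := eval_prefix (projT2 t) w n in
  [/\ N <= n, gsrc (w n) = grng (w 0) & smul s s = s].

Definition good_prefix_filter : set_system nat :=
  fun X => exists t N, good_prefix t N `<=` X.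

Lemma good_prefix_proper : ProperFilter good_prefix_filter.
Proof.
apply: Build_ProperFilter_ex => [X [[S phi] [N gX]] | ].
  have [n gn] := recurrent_idempotent_prefix w_path w_rec phi N.
  by exists n; apply: gX.
split.
- by exists (existT _ _ (unit_ghom A)), 0.
- move=> X Y [[S p] [M gX]] [[T q] [N gY]].
  exists (existT _ _ (pair_ghom p q)), (maxn M N) => n [/=].
  rewrite geq_max eval_prefix_pair => /andP[Mn Nn] loop [pp qq].
  by split; [apply: gX | apply: gY].
- by move=> X Y XY [t [N gX]]; exists t, N => n /gX /XY.
Qed.

Lemma recurrent_P_has_idempotent (V : sgd -> Prop) : P_has_idempotent V w.
Proof.
have [G [GU FG]] := ultraFilterLemma good_prefix_proper.
have Ggood t N : G (good_prefix t N) by apply: FG; exists t, N.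
pose pi S (_ : V S) (phi : ghom A S) :=
  proj1_sig (cid (ultra_finite_value (eval_prefix phi w) GU)).
have piP S hS phi : G (fun n => eval_prefix phi w n = pi S hS phi).
  by rewrite /pi; case: cid.
have good_pi S hS phi N : exists n, good_prefix (existT _ S phi) N n /\
                                    eval_prefix phi w n = pi S hS phi.
  have [n [? ?]] := filter_ex (filterI (Ggood (existT _ S phi) N) (piP S hS phi)).
  by exists n.
exists (grng (w 0)), pi; split; [split|split].
- move=> S hS phi; have [n [[_ loop _] <-]] := good_pi S hS phi 0.
  by rewrite ssrc_eval_prefix // srng_eval_prefix // loop.
- move=> S T hS hT psi phi phi' _ phi'E.
  apply: (ultra_value_unique GU (piP T hT phi')).
  by apply: filterS (piP S hS phi) => n <-; apply: eval_prefix_shom.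
- by move=> S hS phi; have [n [[_ _ idem] <-]] := good_pi S hS phi 0.
- move=> k Ss hs phis N.
  have Gall : G (fun n => forall i,
                  eval_prefix (phis i) w n = pi (Ss i) (hs i) (phis i)).
    by apply: filter_forall => i; apply: piP.
  have [n [[Nn loop _] Hn]] :=
    filter_ex (filterI (Ggood (existT _ _ (unit_ghom A)) N) Gall).
  by exists n; do 3!split=> //; move=> i; rewrite Hn.
Qed.

End RecurrentCluster.

(** * Factors of words *)

Section Lastn.
Variable T : Type.
Implicit Types (s t : seq T) (n : nat).

Definition lastn n s := drop (size s - n) s.

Lemma lastnE n s : lastn n s = rev (take n (rev s)).
Proof. by rewrite take_rev revK. Qed.

Lemma size_lastn n s : size (lastn n s) = minn n (size s).
Proof. by rewrite size_drop; lia. Qed.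

Lemma lastn_oversize n s : size s <= n -> lastn n s = s.
Proof. by move=> sn; rewrite /lastn (_ : size s - n = 0) ?drop0 //; lia. Qed.

Lemma lastn_catr n s t : n <= size t -> lastn n (s ++ t) = lastn n t.
Proof. by move=> nt; rewrite !lastnE rev_cat takel_cat // size_rev. Qed.

Lemma behead_take n s : behead (take n s) = take n.-1 (behead s).
Proof. by case: s => [|a s]; case: n => [|n] //=; rewrite take0. Qed.

Lemma take_cat_take n s t : take n (s ++ t) = take n (take n s ++ take n t).
Proof.
have [ns | sn] := leqP n (size s).
  by rewrite !takel_cat ?take_takel // size_take_min; lia.
rewrite (take_oversize (ltnW sn)) !take_cat ltnNge (ltnW sn) /=.
by rewrite take_takel //; lia.
Qed.

Lemma lastn_cat_lastn n s t : lastn n (s ++ t) = lastn n (lastn n s ++ lastn n t).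
Proof. by rewrite !lastnE !rev_cat !revK take_cat_take. Qed.

End Lastn.

Section Infix.
Variables (T : eqType) (u : seq T).
Implicit Types (s t : seq T).
Local Notation K := (size u).

Lemma infix_prefix_behead s : infix u s = prefix u s || infix u (behead s).
Proof. by case: s => [|a s] //; rewrite /= orbb. Qed.

Lemma prefix_take s : prefix u (take K s) = prefix u s.
Proof. by rewrite !prefixE take_takel. Qed.

Lemma infix_take n s : infix u (take n s) -> infix u s.
Proof. by move=> /(infix_catr (drop n s)); rewrite cat_take_drop. Qed.

Lemma infix_lastn n s : infix u (lastn n s) -> infix u s.
Proof. by move=> /(infix_catl (take (size s - n) s)); rewrite cat_take_drop. Qed.

Lemma infix_cat_take s t : infix u (s ++ t) = infix u (s ++ take K t) || infix u t.
Proof.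
elim: s => [|a s IHs].
  by rewrite orb_idl //; apply: infix_take.
rewrite !cat_cons !infix_consl -orbA -IHs; congr (_ || _).
rewrite !prefixE -!cat_cons; congr (_ == _).
by rewrite take_cat_take [in RHS]take_cat_take take_takel.
Qed.

End Infix.

Lemma infix_lastn_cat (T : eqType) (u s t : seq T) :
  infix u (s ++ t) = infix u s || infix u (lastn (size u) s ++ t).
Proof.
rewrite -infix_rev rev_cat (infix_cat_take (rev u)) size_rev take_rev.
by rewrite -/(lastn _ s) -rev_cat !infix_rev orbC.
Qed.

Section InfixBehead.
Variables (T : eqType) (u : seq T).
Implicit Types (s t : seq T).
Local Notation K := (size u).

Lemma infix_behead_cat s t :
  infix u (behead (s ++ t)) =
  [|| infix u (behead s), infix u (behead (lastn K s ++ take K t))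
    | infix u (behead t)].
Proof.
have [->|u0] := eqVneq u [::]; first by rewrite !infix0s.
case: s => [|a s].
  rewrite /= (negbTE u0) behead_take /=.
  by symmetry; apply: orb_idl; apply: infix_take.
rewrite cat_cons /= infix_cat_take infix_lastn_cat.
rewrite [infix u t]infix_prefix_behead -prefix_take.
set p := take K t.
have pB q : prefix u p -> infix u (q ++ p) by move=> /prefixW /infix_catl.
suff cross : [|| infix u s, infix u (lastn K s ++ p) | prefix u p] =
             infix u s || infix u (behead (lastn K (a :: s) ++ p)).
  by rewrite !orbA -cross !orbA.
have [Ks | sK] := leqP K (size s).
  rewrite -cat1s lastn_catr //.
  set z := lastn K s.
  have zK : size z = K by rewrite size_lastn; lia.
  have zu : prefix u (z ++ p) -> infix u s.
    rewrite prefixE take_size_cat // => /eqP zu.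
    by apply: (infix_lastn (n := K)); rewrite -/z zu infix_refl.
  have pz : prefix u p -> infix u (behead (z ++ p)).
    case: z zK {zu} => [/esym/eqP|c z _]; first by rewrite size_eq0 (negbTE u0).
    exact: pB.
  rewrite [infix u (z ++ p)]infix_prefix_behead.
  move/implyP: zu; move/implyP: pz.
  by case: (infix u s); case: (prefix u (z ++ p));
     case: (infix u (behead (z ++ p))); case: (prefix u p).
rewrite !lastn_oversize //= ?orbA; last by lia.
by apply: orb_idr => /pB ->; rewrite orbT.
Qed.
End InfixBehead.

Lemma infix_nth (T : eqType) (x0 : T) (u s : seq T) :
  infix u s ->
  exists2 i, i + size u <= size s &
    forall j, j < size u -> nth x0 s (i + j) = nth x0 u j.
Proof.
case/infixP=> p [q ->]; exists (size p); first by rewrite !size_cat; lia.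
by move=> j ju; rewrite nth_cat ltnNge leq_addr /= addKn nth_cat ju.
Qed.

Lemma catl_neq0 (T : eqType) (x y : seq T) : x != [::] -> x ++ y != [::].
Proof. by case: x. Qed.

(** * An LSl semigroup of descriptions of words *)

Section Descriptions.
Variables (S : finType) (a0 : S) (u : seq S).
Local Notation K := (size u).

Definition desc_type := ({bseq K of S} * {bseq K of S} * bool)%type.

Definition desc (x : seq S) : desc_type :=
  (insub_bseq K (take K x), insub_bseq K (lastn K x), infix u (behead x)).

Lemma desc_eqP x y :
  desc x = desc y <->
  [/\ take K x = take K y, lastn K x = lastn K y
    & infix u (behead x) = infix u (behead y)].
Proof.
have val_insub s : size s <= K -> val (insub_bseq K s) = s.
  by move=> sK; rewrite /insub_bseq insubdK.
have tK z : size (take K z) <= K by rewrite size_take_min geq_minl.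
have lK z : size (lastn K z) <= K by rewrite size_lastn geq_minl.
split=> [[/(congr1 val) ex /(congr1 val) ey ef] | [tx lx fx]].
  by rewrite !val_insub in ex ey.
by rewrite /desc tx lx fx.
Qed.

Lemma desc_cat x x' y y' :
  desc x = desc x' -> desc y = desc y' -> desc (x ++ y) = desc (x' ++ y').
Proof.
move=> /desc_eqP[tx lx fx] /desc_eqP[ty ly fy]; apply/desc_eqP; split.
- by rewrite take_cat_take tx ty -take_cat_take.
- by rewrite lastn_cat_lastn lx ly -lastn_cat_lastn.
- by rewrite [LHS]infix_behead_cat [RHS]infix_behead_cat fx fy lx ty.
Qed.

Lemma desc_idem_infix x :
  prefix u x -> desc (x ++ x) = desc x -> infix u (behead x).
Proof.
move=> ux /desc_eqP[_ _ <-].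
case: x ux => [|a x] ux; first by move: ux; rewrite prefixs0 => /eqP->.
by rewrite cat_cons /= infix_catl // prefixW.
Qed.

(* A nonempty word with description [d], or the junk word [a0] if there is
   none; by [desc_cat] the product below does not depend on the choice. *)
Definition desc_rep (d : desc_type) : seq S :=
  if pselect (exists2 x, x != [::] & desc x = d) is left ex
  then s2val (cid2 ex) else [:: a0].

Lemma desc_rep_neq0 d : desc_rep d != [::].
Proof. by rewrite /desc_rep; case: pselect => // ex; case: cid2. Qed.

Lemma desc_repK x : x != [::] -> desc (desc_rep (desc x)) = desc x.
Proof.
move=> x0; rewrite /desc_rep; case: pselect => [ex | []]; last by exists x.
by case: cid2.
Qed.

Definition desc_mul (d e : desc_type) : desc_type :=
  desc (desc_rep d ++ desc_rep e).

Lemma desc_mull x e : x != [::] -> desc_mul (desc x) e = desc (x ++ desc_rep e).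
Proof. by move=> x0; apply: desc_cat; first exact: desc_repK. Qed.

Lemma desc_mulr d y : y != [::] -> desc_mul d (desc y) = desc (desc_rep d ++ y).
Proof. by move=> y0; apply: desc_cat; last exact: desc_repK. Qed.

Lemma desc_mul_desc x y :
  x != [::] -> y != [::] -> desc_mul (desc x) (desc y) = desc (x ++ y).
Proof.
by move=> x0 y0; rewrite desc_mull //; apply: desc_cat; last exact: desc_repK.
Qed.

Lemma desc_mulA d e f : desc_mul (desc_mul d e) f = desc_mul d (desc_mul e f).
Proof.
have cat0 d' e' := catl_neq0 (desc_rep e') (desc_rep_neq0 d').
rewrite [desc_mul d e]/desc_mul [desc_mul e f]/desc_mul.
by rewrite desc_mull // desc_mulr // catA.
Qed.

Definition desc_sgd : sgd :=
  @Sgd unit desc_type (fun _ => tt) (fun _ => tt) desc_mul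
    (fun _ _ _ => erefl) (fun _ _ _ => erefl) (fun d e f _ _ => desc_mulA d e f).

Lemma desc_rep_mulK d e : desc (desc_rep (desc_mul d e)) = desc_mul d e.
Proof. exact/desc_repK/catl_neq0/desc_rep_neq0. Qed.

Section Sandwich.
Variable E : seq S.
Hypotheses (E0 : E != [::]) (EE : desc (E ++ E) = desc E).

Lemma desc_idem_size : K <= size E.
Proof.
have [/(congr1 size) + _ _] := (desc_eqP (E ++ E) E).1 EE.
by rewrite !size_take_min size_cat; case: E E0 => //= a E' _; lia.
Qed.

Lemma take_desc_idem_cat Z : take K (E ++ Z) = take K E.
Proof. exact/takel_cat/desc_idem_size. Qed.

Lemma lastn_cat_desc_idem Z : lastn K (Z ++ E) = lastn K E.
Proof. exact/lastn_catr/desc_idem_size. Qed.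

Lemma infix_behead_sandwich X Y :
  infix u (behead ((E ++ X ++ E) ++ (E ++ Y ++ E))) =
  infix u (behead (E ++ X ++ E)) || infix u (behead (E ++ Y ++ E)).
Proof.
have [_ _] := (desc_eqP (E ++ E) E).1 EE.
rewrite [LHS]infix_behead_cat => fEE.
have fE Z : infix u (behead E) -> infix u (behead (E ++ Z)).
  by rewrite infix_behead_cat => ->.
rewrite [LHS]infix_behead_cat catA lastn_cat_desc_idem -catA take_desc_idem_cat.
case: (boolP (infix u (behead (lastn K E ++ take K E)))) => [cross | _].
  by rewrite fE // -fEE cross orbT.
by rewrite orFb.
Qed.

End Sandwich.

Lemma desc_sgd_LSl : LSl desc_sgd.
Proof.
split; first by rewrite /is_semigroup card_unit.
move=> e s t /= ee.
have eE : desc (desc_rep e) = e by rewrite -ee desc_rep_mulK.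
set E := desc_rep e in eE.
have E0 : E != [::] by apply: desc_rep_neq0.
have EE : desc (E ++ E) = desc E by rewrite eE.
have sandwich z : desc_mul (desc_mul e z) e = desc (E ++ desc_rep z ++ E).
  by rewrite -[in X in desc_mul _ X]eE desc_mul_desc ?catA ?catl_neq0.
rewrite !sandwich !desc_mul_desc ?catl_neq0 //.
split; apply/desc_eqP; split.
- by rewrite -catA !take_desc_idem_cat.
- by rewrite !catA !lastn_cat_desc_idem.
- by rewrite infix_behead_sandwich // orbb.
- by rewrite -!catA !take_desc_idem_cat.
- by rewrite !catA !lastn_cat_desc_idem.
- by rewrite !infix_behead_sandwich // orbC.
Qed.

End Descriptions.

(** * Idempotent cluster points give recurrence *)

Lemma shift_recurrent (T : Type) (w : nat -> T) n p :
  0 < p -> (forall j, j < 2 * n -> w (p + j) = w j) ->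
  exists m, n < m /\ forall j, j < n -> w j = w (m + j).
Proof.
move=> p0 wp.
have periodic s j : s * p + j < 2 * n + p -> w (s * p + j) = w j.
  elim: s => [|s IHs] sj; first by rewrite mul0n.
  by rewrite mulSn -addnA wp ?IHs //; lia.
exists ((n %/ p).+1 * p); have := divn_eq n p; have := ltn_pmod n p0.
move=> rp np; split=> [|j jn]; first by rewrite mulSn; lia.
by rewrite periodic // mulSn; lia.
Qed.

Section PrefixCode.
Variables (A : graph) (w : nat -> gE A) (K : nat).

(* Edges form an arbitrary type: recode them into the finite alphabet
   'I_K.+1, injectively on the edges of w[0,K). *)
Definition prefix_code (e : gE A) : 'I_K.+1 :=
  if pselect (exists j : 'I_K, w j = e) is left ex
  then widen_ord (leqnSn K) (proj1_sig (cid ex)) else ord_max.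

Lemma prefix_code_inj j e : j < K -> prefix_code e = prefix_code (w j) -> e = w j.
Proof.
move=> jK; rewrite {2}/prefix_code.
case: pselect => [exj | []]; last by exists (Ordinal jK).
case: cid => /= j' <-; rewrite /prefix_code.
case: pselect => [exe | _ /(congr1 val)/=]; last by have := ltn_ord j'; lia.
by case: cid => /= j'' <- /(congr1 val) /= /val_inj ->.
Qed.

Definition code_word n := [seq prefix_code (w i) | i <- iota 0 n].

Definition code_ghom : ghom A (desc_sgd ord0 (code_word K)) :=
  @GHom A (desc_sgd ord0 (code_word K)) (fun _ => tt)
    (fun e => desc (code_word K) [:: prefix_code e])
    (fun _ => erefl) (fun _ => erefl).

Lemma eval_code_ghom m :
  eval_prefix code_ghom w m = desc (code_word K) (code_word m.+1).
Proof.
elim: m => [|m IHm] //.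
rewrite /eval_prefix prodpS -/(eval_prefix _ w m) IHm /= desc_mul_desc //.
by rewrite /code_word -[m.+2]addn1 iotaD map_cat.
Qed.

Lemma code_idempotent_shift m :
  K <= m.+1 ->
  let e := eval_prefix code_ghom w m in smul e e = e ->
  exists2 p, 0 < p & forall j, j < K -> w (p + j) = w j.
Proof.
move=> Km /=; rewrite eval_code_ghom desc_mul_desc // => idem.
have size_code n : size (code_word n) = n by rewrite size_map size_iota.
have nth_code n i : i < n -> nth ord0 (code_word n) i = prefix_code (w i).
  by move=> i_n; rewrite (nth_map 0) ?size_iota // nth_iota.
have pref : prefix (code_word K) (code_word m.+1).
  by rewrite prefixE size_code -map_take take_iota (minn_idPl Km).
have [i + shift] := infix_nth ord0 (desc_idem_infix pref idem).
rewrite size_behead !size_code /= => iK.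
exists i.+1 => // j jK; apply: prefix_code_inj => //.
by have := shift j; rewrite size_code nth_behead -addSn !nth_code //; [apply | lia].
Qed.

End PrefixCode.

Lemma P_has_idempotent_recurrent (V : sgd -> Prop) (A : graph) (w : nat -> gE A) :
  (forall S, LSl S -> V S) -> P_has_idempotent V w -> recurrent w.
Proof.
move=> V_LSl [x [pi [_ [pi_idem pi_cluster]]]] n.
have VD := V_LSl _ (desc_sgd_LSl ord0 (code_word w (2 * n) (2 * n))).
have [m [Km [_ [_ piE]]]] :=
  pi_cluster 1 (fun=> _) (fun=> VD) (fun=> code_ghom w (2 * n)) (2 * n).
have := pi_idem _ VD (code_ghom w (2 * n)); rewrite (piE ord0).
by case/(code_idempotent_shift (leqW Km)) => p p0 /(shift_recurrent p0).
Qed.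

Theorem mainTheorem16 (A : graph) (w : nat -> gE A) :
  rinf_path w ->
  [/\ recurrent w <-> P_has_idempotent Sd w,
      recurrent w <-> (forall V : sgd -> Prop, pseudovariety V -> contains_N V ->
                         P_has_idempotent V w)
    & recurrent w <-> P_has_idempotent gLSl w].
Proof.
move=> w_path.
have rec_P V : recurrent w -> P_has_idempotent V w.
  by move=> w_rec; apply: recurrent_P_has_idempotent.
have P_rec V : (forall S, LSl S -> V S) -> P_has_idempotent V w -> recurrent w.
  exact: P_has_idempotent_recurrent.
have gLSl_LSl S : LSl S -> gLSl S by move=> LSl_S V _; apply.
split; split.
- exact: rec_P.
- exact: P_rec.
- by move=> w_rec V _ _; apply: rec_P.
- by move=> P; apply: (P_rec Sd) => //; apply: P; split.
- exact: rec_P.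
- exact: P_rec gLSl_LSl.
Qed.
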